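(* Let $n\ge 3$ and let $\mathcal{H}$ be the associating hypergraph on $M(D_n,2)$. Then its matching polynomial is $$M(\mathcal{H},w)=\sum_{k=0}^{\,n+\lfloor n/3\rfloor} a_k\, w_1^{\,4n-3k}\, w_2^{\,k},$$ where $a_k$ is the number of $k$-matchings of $\mathcal{H}$, and $a_k\neq 0$ for $k=n+\lfloor n/3\rfloor$.
   Context: $D_n=\langle x,y\mid x^n=y^2=1,\ xy=yx^{-1}\rangle$. $M(D_n,2)=\{(g,\alpha): g\in D_n,\ \alpha\in\mathbb{Z}_2\}$ with $(g_1,\alpha_1)\circ(g_2,\alpha_2)=(g_1^{1-\alpha_2} g_2^{(-1)^{\alpha_1}} g_1^{\alpha_2},\ \alpha_1+\alpha_2)$. The associating hypergraph $\mathcal{H}$ has vertex set $M(D_n,2)$ ($4n$ vertices), and a 3-element set $\{a,b,c\}$ of distinct elements is a hyperedge when $(a\circ b)\circ c=a\circ(b\circ c)$. A $k$-matching is a set of $k$ pairwise vertex-disjoint hyperedges. For a 3-uniform hypergraph with vertex set $V$, the matching polynomial is $M(\mathcal{H},w)=\sum_{M} w_1^{|V|-3|M|} w_2^{|M|}$, the sum over all matchings $M$ (including the empty one), where $w_1,w_2$ are indeterminates (weights of unmatched vertices and of matching hyperedges). *)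

From HB Require Import structures.
From mathcomp Require Import all_boot all_order all_algebra.
From mathcomp Require Import mpoly.
Set Implicit Arguments. Unset Strict Implicit. Unset Printing Implicit Defensive.
Import GRing.Theory.
Local Open Scope ring_scope.

(* The dihedral group D_n = <x,y | x^n = y^2 = 1, xy = yx^-1>, realised concretely:
   the pair (i, a) : 'Z_n * bool stands for x^i y^a  (meaningful for n >= 2). *)
Definition dih (n : nat) : finType := ('Z_n * bool)%type.

Definition dih_one (n : nat) : dih n := (0, false).

(* x^i y^a * x^j y^b = x^(i + (-1)^a j) y^(a+b), since y x^j = x^-j y *)
Definition dih_mul (n : nat) (g h : dih n) : dih n :=
  ((g.1 + (if g.2 then - h.1 else h.1))%R, g.2 (+) h.2).

Definition dih_inv (n : nat) (g : dih n) : dih n :=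
  if g.2 then g else ((- g.1)%R, false).

Definition dih_pow01 (n : nat) (g : dih n) (k : bool) : dih n :=
  if k then g else dih_one n.

Definition dih_powsign (n : nat) (g : dih n) (a : bool) : dih n :=
  if a then dih_inv g else g.

(* M(D_n,2) = D_n x Z_2, with Z_2 represented by bool (addition = xor) *)
Definition MD (n : nat) : finType := (dih n * bool)%type.

(* (g1,a1) o (g2,a2) = (g1^(1-a2) g2^((-1)^a1) g1^a2, a1+a2) *)
Definition MD_op (n : nat) (p q : MD n) : MD n :=
  (dih_mul (dih_mul (dih_pow01 p.1 (~~ q.2)) (dih_powsign q.1 p.2)) (dih_pow01 p.1 q.2),
   p.2 (+) q.2).

Definition assoc_hyperedge (n : nat) (e : {set MD n}) : bool :=
  [exists a : MD n, exists b : MD n, exists c : MD n,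
     [&& a != b, a != c, b != c, e == [set a; b; c] &
         MD_op (MD_op a b) c == MD_op a (MD_op b c)]].

Definition is_matching (n : nat) (M : {set {set MD n}}) : bool :=
  [forall e in M, assoc_hyperedge e] &&
  [forall e in M, forall f in M, (e != f) ==> [disjoint e & f]].

Definition num_matchings (n k : nat) : nat :=
  #|[set M : {set {set MD n}} | is_matching M & #|M| == k]|.

(* Matching polynomial M(H, w) in Z[w1, w2], with w1 = 'X_0 and w2 = 'X_1. *)
Definition matching_poly (n : nat) : {mpoly int[2]} :=
  \sum_(M : {set {set MD n}} | is_matching M)
     ('X_(0 : 'I_2) ^+ (#|MD n| - 3 * #|M|)%N * 'X_(1 : 'I_2) ^+ #|M|).

From mathcomp Require Import all_boot all_order all_algebra.
From mathcomp Require Import mpoly ring zify.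
Set Implicit Arguments. Unset Strict Implicit. Unset Printing Implicit Defensive.
Import GRing.Theory.
Local Open Scope ring_scope.

(* A matching covers 3|M| of the 4n vertices, so |M| <= n + floor(n/3), and grouping
   the matchings by size gives the displayed form of the matching polynomial.  A
   matching of that size exists: for each i, the triple (x^i, 1), (x^j y, 0), (x^k y, 1)
   is associative as soon as 2(i + j) = 2k (mod n), and choosing j, k as permutations
   of Z_n these n triples cover every vertex outside the layer (x^i, 0); on that
   layer the operation is the group law of the rotations, so it splits into the
   floor(n/3) associative triples x^3t, x^(3t+1), x^(3t+2). *)

Lemma sumr_fiber_card (I : finType) (R : nmodType) (P : pred I) (c : I -> nat)
    (F : nat -> R) K :
  (forall i, P i -> c i < K)%N ->
  \sum_(i | P i) F (c i) = \sum_(0 <= k < K) F k *+ #|[set i | P i & c i == k]|.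
Proof.
move=> c_lt; rewrite big_mkord.
transitivity (\sum_(i | P i) \sum_(k < K | c i == k) F k).
  by apply: eq_bigr => i Pi; rewrite (big_pred1 (Ordinal (c_lt i Pi))).
rewrite (exchange_big_dep predT) //=; apply: eq_bigr => k _.
by rewrite -sumr_const; apply: eq_bigl => i; rewrite inE.
Qed.

Lemma leq_card_uniform_trivIset (T : finType) (P : {set {set T}}) m :
  trivIset P -> {in P, forall A : {set T}, #|A| = m} -> (m * #|P| <= #|T|)%N.
Proof.
move=> /eqP cover_card card_m.
rewrite mulnC -sum_nat_const -(eq_bigr _ card_m) cover_card; exact: max_card.
Qed.

Lemma card_MD n : (1 < n)%N -> #|MD n| = (4 * n)%N.
Proof. by move=> n_gt1; rewrite !card_prod card_bool card_ord Zp_cast //; lia. Qed.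

Lemma assoc_hyperedge_card n (e : {set MD n}) : assoc_hyperedge e -> #|e| = 3%N.
Proof.
case/existsP=> a /existsP[b /existsP[c /and5P[ab ac bc /eqP-> _]]].
by rewrite -setUA cardsU1 cards2 bc !inE negb_or ab ac.
Qed.

Lemma matching_trivIset n (M : {set {set MD n}}) : is_matching M -> trivIset M.
Proof.
case/andP=> _ /forall_inP disj; apply/trivIsetP => A B AM BM.
by move/forall_inP: (disj A AM) => /(_ B BM) /implyP.
Qed.

Lemma matching_card_le n (M : {set {set MD n}}) :
  (1 < n)%N -> is_matching M -> (3 * #|M| <= 4 * n)%N.
Proof.
move=> n_gt1 M_matching; rewrite -card_MD //.
apply: leq_card_uniform_trivIset; first exact: matching_trivIset.
by case/andP: M_matching => /forall_inP edges _ e /edges /assoc_hyperedge_card.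
Qed.

Lemma assoc_hyperedge_set3 n (a b c : MD n) : a != b -> a != c -> b != c ->
  MD_op (MD_op a b) c = MD_op a (MD_op b c) -> assoc_hyperedge [set a; b; c].
Proof.
move=> ab ac bc abc; apply/existsP; exists a; apply/existsP; exists b.
by apply/existsP; exists c; rewrite ab ac bc abc !eqxx.
Qed.

Lemma disjoint_hyperedges_neq n (e f : {set MD n}) :
  assoc_hyperedge e -> [disjoint e & f] -> e != f.
Proof.
move/assoc_hyperedge_card=> e_card; apply: contraTneq => <-.
by rewrite -setI_eq0 setIid -cards_eq0 e_card.
Qed.

(* [vtx n s a i] is the vertex (x^i y^s, a) of M(D_n, 2). *)
Definition vtx n (s a : bool) (i : nat) : MD n := ((i%:R, s), a).

Lemma MD_op_assoc_rotations n x y z :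
  MD_op (MD_op (vtx n false false x) (vtx n false false y)) (vtx n false false z)
  = MD_op (vtx n false false x) (MD_op (vtx n false false y) (vtx n false false z)).
Proof.
by rewrite /MD_op /dih_mul /dih_pow01 /dih_powsign /dih_one /vtx /= !addr0 addrA.
Qed.

Lemma MD_op_assoc_mixed n x y z :
  (1 < n)%N -> (2 * (x + y) = 2 * z %[mod n])%N ->
  MD_op (MD_op (vtx n false true x) (vtx n true false y)) (vtx n true true z)
  = MD_op (vtx n false true x) (MD_op (vtx n true false y) (vtx n true true z)).
Proof.
move=> n_gt1 xyz_mod.
have : (2 * (x + y))%:R = (2 * z)%:R :> 'Z_n.
  by rewrite -Zp_nat_mod // xyz_mod Zp_nat_mod.
rewrite !natrM natrD => xyz.
rewrite /MD_op /dih_mul /dih_pow01 /dih_powsign /dih_inv /dih_one /vtx /=.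
congr (_, _, _); apply/eqP; rewrite -subr_eq0.
have -> : 0 + z%:R - (x%:R + y%:R - 0) - (0 - (0 + z%:R - y%:R) + x%:R)
  = 2 * z%:R - 2 * (x%:R + y%:R) :> 'Z_n by ring.
by rewrite xyz subrr.
Qed.

Section LargeMatching.

Variable n : nat.
Hypothesis n_ge3 : (3 <= n)%N.

Let n_gt1 : (1 < n)%N. Proof. lia. Qed.

Let half_n : n = (n./2 + n./2 + odd n)%N.
Proof. by rewrite {1}(esym (odd_double_half n)) -addnn addnC. Qed.

(* Permutations j = [refl0_index] and k = [refl1_index] of [0, n) with
   2 (i + j i) = 2 k i (mod n).  For odd n take j = id and k = doubling.  For even
   n = 2m doubling only reaches the even residues, so on the upper half i >= m take
   k i = 2 i - n + 1 instead and compensate by cycling j through [m, n) one step;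
   this works because the congruence only constrains i + j i - k i modulo m. *)
Definition refl0_index i :=
  if odd n then i else if (i < n./2)%N then i else if (i.+1 < n)%N then i.+1 else n./2.

Definition refl1_index i :=
  if odd n then (if (i < n./2.+1)%N then 2 * i else 2 * i - n)%N
  else (if (i < n./2)%N then 2 * i else 2 * i - n + 1)%N.

Lemma refl0_index_lt i : (i < n)%N -> (refl0_index i < n)%N.
Proof.
by move=> i_lt; move: half_n; rewrite /refl0_index; case: odd => /=; do ?case: ifP; lia.
Qed.

Lemma refl1_index_lt i : (i < n)%N -> (refl1_index i < n)%N.
Proof.
by move=> i_lt; move: half_n; rewrite /refl1_index; case: odd => /=; do ?case: ifP; lia.
Qed.

Lemma refl0_index_inj i i' : (i < n)%N -> (i' < n)%N ->
  refl0_index i = refl0_index i' -> i = i'.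
Proof.
by move=> i_lt i'_lt; move: half_n; rewrite /refl0_index; case: odd => /=; do ?case: ifP; lia.
Qed.

Lemma refl1_index_inj i i' : (i < n)%N -> (i' < n)%N ->
  refl1_index i = refl1_index i' -> i = i'.
Proof.
by move=> i_lt i'_lt; move: half_n; rewrite /refl1_index; case: odd => /=; do ?case: ifP; lia.
Qed.

Lemma refl_index_congr i : (i < n)%N ->
  (2 * (i + refl0_index i) = 2 * refl1_index i %[mod n])%N.
Proof.
move=> i_lt.
suff [t ->] : exists t, (2 * (i + refl0_index i) = t * n + 2 * refl1_index i)%N.
  by rewrite modnMDl.
move: half_n; rewrite /refl0_index /refl1_index.
case: (odd n) => /= n_half.
  by case: ifP => i_half; [exists 0%N | exists 2%N]; lia.
case: ifP => i_half; first by exists 0%N; lia.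
by case: ifP => i_top; [exists 2%N | exists 1%N]; lia.
Qed.

Definition vtx_code (x : MD n) : bool * bool * nat := (x.1.2, x.2, val x.1.1).

Lemma vtx_codeK s a i : (i < n)%N -> vtx_code (vtx n s a i) = (s, a, i).
Proof. by move=> i_lt; rewrite /vtx_code /vtx /= val_Zp_nat // modn_small. Qed.

Lemma vtx_neq s a i s' a' i' : (i < n)%N -> (i' < n)%N ->
  (s, a, i) != (s', a', i') -> vtx n s a i != vtx n s' a' i'.
Proof.
move=> i_lt i'_lt; apply: contra_neq => /(congr1 vtx_code).
by rewrite !vtx_codeK.
Qed.

Lemma vtx_code_set3 s1 a1 i1 s2 a2 i2 s3 a3 i3 x :
  (i1 < n)%N -> (i2 < n)%N -> (i3 < n)%N ->
  x \in [set vtx n s1 a1 i1; vtx n s2 a2 i2; vtx n s3 a3 i3] ->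
  vtx_code x \in [:: (s1, a1, i1); (s2, a2, i2); (s3, a3, i3)].
Proof.
move=> i1_lt i2_lt i3_lt; rewrite !inE -orbA.
by case/or3P=> /eqP->; rewrite vtx_codeK ?eqxx ?orbT.
Qed.

Definition mixed_edge i : {set MD n} :=
  [set vtx n false true i; vtx n true false (refl0_index i);
       vtx n true true (refl1_index i)].

Definition rotation_edge t : {set MD n} :=
  [set vtx n false false (3 * t); vtx n false false (3 * t + 1);
       vtx n false false (3 * t + 2)].

Lemma rotation_edge_bound t : (t < n %/ 3)%N -> (3 * t + 2 < n)%N.
Proof. by move=> t_lt; have := leq_divM n 3; lia. Qed.

Lemma assoc_hyperedge_mixed i : (i < n)%N -> assoc_hyperedge (mixed_edge i).
Proof.
move=> i_lt; have j_lt := refl0_index_lt i_lt; have k_lt := refl1_index_lt i_lt.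
apply: assoc_hyperedge_set3; try exact: vtx_neq.
exact: MD_op_assoc_mixed (refl_index_congr i_lt).
Qed.

Lemma assoc_hyperedge_rotation t : (t < n %/ 3)%N -> assoc_hyperedge (rotation_edge t).
Proof.
move/rotation_edge_bound => t_bound.
apply: assoc_hyperedge_set3; last exact: MD_op_assoc_rotations.
all: by apply: vtx_neq; rewrite ?xpair_eqE; lia.
Qed.

Lemma mixed_edge_codes i x : (i < n)%N -> x \in mixed_edge i ->
  vtx_code x \in [:: (false, true, i); (true, false, refl0_index i);
                     (true, true, refl1_index i)].
Proof. by move=> i_lt; apply: vtx_code_set3; rewrite ?refl0_index_lt ?refl1_index_lt. Qed.

Lemma rotation_edge_codes t x : (t < n %/ 3)%N -> x \in rotation_edge t ->
  vtx_code x \in [:: (false, false, 3 * t); (false, false, 3 * t + 1);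
                     (false, false, 3 * t + 2)]%N.
Proof. by move/rotation_edge_bound=> t_bound; apply: vtx_code_set3; lia. Qed.

Lemma mixed_edges_disjoint i i' : (i < n)%N -> (i' < n)%N -> i != i' ->
  [disjoint mixed_edge i & mixed_edge i'].
Proof.
move=> i_lt i'_lt /eqP ii'; apply/pred0P => x /=; apply/negbTE/negP.
case/andP=> /(mixed_edge_codes i_lt) + /(mixed_edge_codes i'_lt).
have := refl0_index_inj i_lt i'_lt; have := refl1_index_inj i_lt i'_lt.
by rewrite !inE => k_inj j_inj /or3P[]/eqP-> /or3P[]/eqP[]; lia.
Qed.

Lemma rotation_edges_disjoint t t' : (t < n %/ 3)%N -> (t' < n %/ 3)%N -> t != t' ->
  [disjoint rotation_edge t & rotation_edge t'].
Proof.
move=> t_lt t'_lt /eqP tt'; apply/pred0P => x /=; apply/negbTE/negP.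
case/andP=> /(rotation_edge_codes t_lt) + /(rotation_edge_codes t'_lt).
by rewrite !inE => /or3P[]/eqP-> /or3P[]/eqP[]; lia.
Qed.

Lemma mixed_rotation_disjoint i t : (i < n)%N -> (t < n %/ 3)%N ->
  [disjoint mixed_edge i & rotation_edge t].
Proof.
move=> i_lt t_lt; apply/pred0P => x /=; apply/negbTE/negP.
case/andP=> /(mixed_edge_codes i_lt) + /(rotation_edge_codes t_lt).
by rewrite !inE => /or3P[]/eqP-> /or3P[]/eqP.
Qed.

Definition large_matching : {set {set MD n}} :=
  [set mixed_edge i | i : 'I_n] :|: [set rotation_edge t | t : 'I_(n %/ 3)].

Lemma large_matching_is_matching : is_matching large_matching.
Proof.
apply/andP; split.
  apply/forall_inP => e; rewrite inE => /orP[] /imsetP[i _ ->].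
  - exact: assoc_hyperedge_mixed.
  - exact: assoc_hyperedge_rotation.
apply/forall_inP => e; rewrite inE => /orP[] /imsetP[i _ ->];
apply/forall_inP => f; rewrite inE => /orP[] /imsetP[i' _ ->]; apply/implyP => ef.
- by apply: mixed_edges_disjoint => //; apply: contraNneq ef => ->.
- exact: mixed_rotation_disjoint.
- by rewrite disjoint_sym; apply: mixed_rotation_disjoint.
- by apply: rotation_edges_disjoint => //; apply: contraNneq ef => ->.
Qed.

Lemma large_matching_card : #|large_matching| = (n + n %/ 3)%N.
Proof.
have mixed_inj : injective (fun i : 'I_n => mixed_edge i).
  move=> i i' /= ii'; apply/val_inj/eqP/negPn/negP => ne.
  have := disjoint_hyperedges_neq (assoc_hyperedge_mixed (ltn_ord i))
            (mixed_edges_disjoint (ltn_ord i) (ltn_ord i') ne).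
  by rewrite ii' eqxx.
have rotation_inj : injective (fun t : 'I_(n %/ 3) => rotation_edge t).
  move=> t t' /= tt'; apply/val_inj/eqP/negPn/negP => ne.
  have := disjoint_hyperedges_neq (assoc_hyperedge_rotation (ltn_ord t))
            (rotation_edges_disjoint (ltn_ord t) (ltn_ord t') ne).
  by rewrite tt' eqxx.
have kinds_disjoint :
    [disjoint [set mixed_edge i | i : 'I_n] & [set rotation_edge t | t : 'I_(n %/ 3)]].
  apply/pred0P => e /=; apply/negbTE/negP => /andP[/imsetP[i _ ->] /imsetP[t _ it]].
  have := disjoint_hyperedges_neq (assoc_hyperedge_mixed (ltn_ord i))
            (mixed_rotation_disjoint (ltn_ord i) (ltn_ord t)).
  by rewrite it eqxx.
rewrite cardsU (disjoint_setI0 kinds_disjoint) cards0 subn0.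
by rewrite !card_imset // !card_ord.
Qed.

End LargeMatching.

Theorem mainTheorem11 (n : nat) (hn : (3 <= n)%N) :
  matching_poly n =
    \sum_(0 <= k < (n + n %/ 3).+1)
       (num_matchings n k)%:R * ('X_(0 : 'I_2) ^+ (4 * n - 3 * k)%N * 'X_(1 : 'I_2) ^+ k)
  /\ num_matchings n (n + n %/ 3) <> 0%N.
Proof.
have n_gt1 : (1 < n)%N by lia.
split; last first.
  apply/eqP; rewrite -lt0n; apply/card_gt0P; exists (large_matching n).
  by rewrite inE large_matching_is_matching // large_matching_card // eqxx.
have size_lt (M : {set {set MD n}}) : is_matching M -> (#|M| < (n + n %/ 3).+1)%N.
  by move=> M_matching; have := matching_card_le n_gt1 M_matching; lia.
rewrite /matching_poly card_MD // (sumr_fiber_card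
  (fun k => 'X_(0 : 'I_2) ^+ (4 * n - 3 * k)%N * 'X_(1 : 'I_2) ^+ k) size_lt).
by apply: eq_bigr => k _; rewrite mulr_natl.
Qed.
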